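(* Let $F$ be an infinite field, $n=3$, and let $f,g\in\mathcal{B}_{(1,1)}$ with $f\le_{\mathcal{B}_{(1,1)}}g$. Then $g\in\langle\{f\}\cup I\rangle_{T_{\mathbb{Z}_3}}$.
   Context: $I$ is the $T_{\mathbb{Z}_3}$-ideal of graded identities of $UT_3(F)^{(-)}$ ($3\times3$ upper triangular matrices, bracket $[a,b]=ab-ba$, canonical grading with degree-$k$ component spanned by $e_{ij}$, $j-i=k$) in the free Lie algebra on variables $y_i$ (degree $0$), $z_i$ (degree $1$), $w_i$ (degree $2$). Commutators are left normed. $z_1,z_2$ are fixed distinct variables of degree $1$. $[z_1,a_1y_1,\dots,a_ny_n,z_2,b_1y_1,\dots,b_ny_n]$ denotes the commutator with $z_1$, then $y_1$ repeated $a_1$ times, …, $y_n$ repeated $a_n$ times, then $z_2$, then $y_1$ repeated $b_1$ times, …, $y_n$ repeated $b_n$ times. $\mathcal{B}_{(1,1)}$ is the set of all such commutators with $n\ge0$, $a_i,b_i\ge0$. For such $f$, $V_f=((a_1,b_1),\dots,(a_n,b_n))$. For $f,g\in\mathcal{B}_{(1,1)}$ with $V_f=((a_1,b_1),\dots,(a_n,b_n))$, $V_g=((a'_1,b'_1),\dots,(a'_m,b'_m))$, $f\le_{\mathcal{B}_{(1,1)}}g$ means there is a strictly increasing $\varphi:\{1,\dots,n\}\to\{1,\dots,m\}$ with $a_i\le a'_{\varphi(i)}$ and $b_i\le b'_{\varphi(i)}$ for all $i$. *)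

From HB Require Import structures.
From mathcomp Require Import all_boot all_order all_algebra.
Set Implicit Arguments. Unset Strict Implicit. Unset Printing Implicit Defensive.
Import GRing.Theory.
Local Open Scope ring_scope.

(* Variables of the free Z_3-graded Lie algebra:
   VY i = y_i (degree 0), VZ i = z_i (degree 1), VW i = w_i (degree 2). *)
Inductive var := VY of nat | VZ of nat | VW of nat.

Definition vdeg (v : var) : nat :=
  match v with VY _ => 0 | VZ _ => 1 | VW _ => 2 end.

Inductive lterm (F : Type) :=
| LVar of var
| LZero
| LAdd of lterm F & lterm F
| LScale of F & lterm F
| LBr of lterm F & lterm F.
Arguments LZero {F}.
Arguments LVar {F} v.

(* The congruence whose quotient is the free Lie algebra over F on [var]. *)
Inductive lequiv (F : fieldType) : lterm F -> lterm F -> Prop :=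
| le_refl a : lequiv a a
| le_sym a b : lequiv a b -> lequiv b a
| le_trans a b c : lequiv a b -> lequiv b c -> lequiv a c
| le_add a a' b b' : lequiv a a' -> lequiv b b' -> lequiv (LAdd a b) (LAdd a' b')
| le_scale c a a' : lequiv a a' -> lequiv (LScale c a) (LScale c a')
| le_br a a' b b' : lequiv a a' -> lequiv b b' -> lequiv (LBr a b) (LBr a' b')
| le_addA a b c : lequiv (LAdd a (LAdd b c)) (LAdd (LAdd a b) c)
| le_addC a b : lequiv (LAdd a b) (LAdd b a)
| le_add0 a : lequiv (LAdd LZero a) a
| le_addN a : lequiv (LAdd a (LScale (-1) a)) LZero
| le_scale1 a : lequiv (LScale 1 a) a
| le_scaleA c d a : lequiv (LScale c (LScale d a)) (LScale (c * d) a)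
| le_scaleDr c a b : lequiv (LScale c (LAdd a b)) (LAdd (LScale c a) (LScale c b))
| le_scaleDl c d a : lequiv (LScale (c + d) a) (LAdd (LScale c a) (LScale d a))
| le_brDl a b c : lequiv (LBr (LAdd a b) c) (LAdd (LBr a c) (LBr b c))
| le_brDr a b c : lequiv (LBr a (LAdd b c)) (LAdd (LBr a b) (LBr a c))
| le_brZl k a b : lequiv (LBr (LScale k a) b) (LScale k (LBr a b))
| le_brZr k a b : lequiv (LBr a (LScale k b)) (LScale k (LBr a b))
| le_alt a : lequiv (LBr a a) LZero
| le_jacobi a b c :
    lequiv (LAdd (LAdd (LBr (LBr a b) c) (LBr (LBr b c) a)) (LBr (LBr c a) b)) LZero.

Fixpoint lsubst (F : Type) (s : var -> lterm F) (t : lterm F) : lterm F :=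
  match t with
  | LVar v => s v
  | LZero => LZero
  | LAdd a b => LAdd (lsubst s a) (lsubst s b)
  | LScale c a => LScale c (lsubst s a)
  | LBr a b => LBr (lsubst s a) (lsubst s b)
  end.

Inductive shomog (F : Type) : nat -> lterm F -> Prop :=
| sh_var v : shomog (vdeg v) (LVar v)
| sh_zero d : (d < 3)%N -> shomog d LZero
| sh_add d a b : shomog d a -> shomog d b -> shomog d (LAdd a b)
| sh_scale d c a : shomog d a -> shomog d (LScale c a)
| sh_br d1 d2 a b : shomog d1 a -> shomog d2 b -> shomog ((d1 + d2) %% 3) (LBr a b).

Definition homog (F : fieldType) (d : nat) (t : lterm F) : Prop :=
  exists t', lequiv t t' /\ shomog d t'.

(* The graded T-ideal (T_{Z_3}-ideal) generated by a set S of elements: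
   smallest ideal containing S and stable under all graded endomorphisms. *)
Inductive Tideal (F : fieldType) (S : lterm F -> Prop) : lterm F -> Prop :=
| ti_base t : S t -> Tideal S t
| ti_equiv t t' : Tideal S t -> lequiv t t' -> Tideal S t'
| ti_zero : Tideal S LZero
| ti_add a b : Tideal S a -> Tideal S b -> Tideal S (LAdd a b)
| ti_scale c a : Tideal S a -> Tideal S (LScale c a)
| ti_brl a b : Tideal S a -> Tideal S (LBr a b)
| ti_brr a b : Tideal S b -> Tideal S (LBr a b)
| ti_subst (s : var -> lterm F) t :
    (forall v, homog (vdeg v) (s v)) -> Tideal S t -> Tideal S (lsubst s t).

(* Evaluation in UT_3(F)^(-), bracket = commutator of matrices. *)
Fixpoint evalM (F : fieldType) (phi : var -> 'M[F]_3) (t : lterm F) : 'M[F]_3 :=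
  match t with
  | LVar v => phi v
  | LZero => 0
  | LAdd a b => evalM phi a + evalM phi b
  | LScale c a => c *: evalM phi a
  | LBr a b => evalM phi a *m evalM phi b - evalM phi b *m evalM phi a
  end.

(* phi is a graded evaluation: phi v lies in the degree-(vdeg v) component of
   UT_3(F), i.e. in the span of the e_ij with j - i = vdeg v. *)
Definition graded_eval (F : fieldType) (phi : var -> 'M[F]_3) : Prop :=
  forall v (i j : 'I_3), phi v i j != 0 -> (j : nat) = (i + vdeg v)%N.

Definition graded_identity (F : fieldType) (t : lterm F) : Prop :=
  forall phi : var -> 'M[F]_3, graded_eval phi -> evalM phi t = 0.

Fixpoint yseq (k : nat) (s : seq nat) : seq var :=
  match s with
  | [::] => [::]
  | a :: s' => nseq a (VY k) ++ yseq k.+1 s'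
  end.

Definition lnorm (F : Type) (x0 : var) (xs : seq var) : lterm F :=
  foldl (fun t v => LBr t (LVar v)) (LVar x0) xs.

(* The element of B_(1,1) with V_f = V = ((a_1,b_1),...,(a_n,b_n)):
   [z_1, a_1 y_1, ..., a_n y_n, z_2, b_1 y_1, ..., b_n y_n]. *)
Definition commB (F : Type) (V : seq (nat * nat)) : lterm F :=
  lnorm F (VZ 1) (yseq 1 (unzip1 V) ++ VZ 2 :: yseq 1 (unzip2 V)).

(* The order <=_{B_(1,1)} on the vectors V_f, V_g (0-based indices). *)
Definition leB (V V' : seq (nat * nat)) : Prop :=
  exists phi : nat -> nat,
    (forall i j, (i < j)%N -> (j < size V)%N -> (phi i < phi j)%N) /\
    (forall i, (i < size V)%N ->
       [/\ (phi i < size V')%N,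
           ((nth (0, 0) V i).1 <= (nth (0, 0) V' (phi i)).1)%N &
           ((nth (0, 0) V i).2 <= (nth (0, 0) V' (phi i)).2)%N]).

Definition infinite_field (F : fieldType) : Prop :=
  forall s : seq F, exists x : F, x \notin s.

(* Under a graded assignment into UT_3(F) every y is diagonal, and bracketing
   with a diagonal matrix d multiplies the (i,j) entry by d_jj - d_ii.  Hence the
   value of [z_1, y.., z_2, y..] depends only on the multisets of y's in its two
   blocks.  If f <= g via phi, substituting y_i -> y_phi(i) and
   z_1 -> [z_1, y's of g missing from the first block] in f, then bracketing with
   the y's missing from the second block, yields an element h of the T-ideal of f
   whose two y-blocks are rearrangements of those of g; so g - h is a graded
   identity.  The argument works over any field. *)

From HB Require Import structures.
From mathcomp Require Import all_boot all_order all_algebra.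
Set Implicit Arguments. Unset Strict Implicit. Unset Printing Implicit Defensive.
Import GRing.Theory.
Local Open Scope ring_scope.

Definition var_code (v : var) : nat * nat :=
  match v with VY i => (0, i) | VZ i => (1, i) | VW i => (2, i) end.

Definition var_decode (c : nat * nat) : var :=
  match c with (0, i) => VY i | (1, i) => VZ i | (_, i) => VW i end.

Lemma var_codeK : cancel var_code var_decode. Proof. by case. Qed.

HB.instance Definition _ := Countable.copy var (can_type var_codeK).

Definition isY (v : var) : bool := if v is VY _ then true else false.

Lemma all_isY_yseq k s : all isY (yseq k s).
Proof. by elim: s k => [|a s IH] k //=; rewrite all_cat IH andbT; elim: a. Qed.

Lemma count_yseq (p : pred var) k s :
  (count p (yseq k s) = \sum_(i < size s) p (VY (k + i)) * nth 0 s i)%N.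
Proof.
elim: s k => [|a s IH] k /=; first by rewrite big_ord0.
rewrite count_cat count_nseq IH big_ord_recl /= addn0.
by congr (_ + _); apply: eq_bigr => i _; rewrite addSnnS.
Qed.

Definition ybr (F : Type) (t : lterm F) (ys : seq var) : lterm F :=
  foldl (fun t v => LBr t (LVar v)) t ys.

Lemma ybr_cat (F : Type) (t : lterm F) xs ys : ybr t (xs ++ ys) = ybr (ybr t xs) ys.
Proof. exact: foldl_cat. Qed.

Lemma commB_ybr (F : Type) V :
  commB F V = ybr (LBr (ybr (LVar (VZ 1)) (yseq 1 (unzip1 V))) (LVar (VZ 2)))
                  (yseq 1 (unzip2 V)).
Proof. by rewrite /commB /lnorm -/(ybr _ _) ybr_cat. Qed.

Lemma commutator_diag_mxE (R : comPzRingType) n (M D : 'M[R]_n) i j :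
  is_diag_mx D -> (M *m D - D *m M) i j = M i j * (D j j - D i i).
Proof.
move=> /is_diag_mxP D_diag; rewrite !mxE (bigD1 j) // (bigD1 i (P := xpredT)) //=.
rewrite !big1 ?addr0.
- by rewrite mulrBr [D i i * _]mulrC.
- by move=> k ki; rewrite D_diag ?mul0r // eq_sym.
- by move=> k kj; rewrite D_diag ?mulr0.
Qed.

Section DiagonalBrackets.
Variables (F : fieldType) (phi : var -> 'M[F]_3).

Lemma evalM_ybr t ys i j :
  {in ys, forall v, is_diag_mx (phi v)} ->
  evalM phi (ybr t ys) i j =
  evalM phi t i j * \prod_(v <- ys) (phi v j j - phi v i i).
Proof.
elim: ys t => [|v ys IH] t ys_diag /=; first by rewrite big_nil mulr1.
rewrite IH => [|w w_ys]; last by apply: ys_diag; rewrite inE w_ys orbT.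
by rewrite big_cons mulrA commutator_diag_mxE // ys_diag // mem_head.
Qed.

Lemma evalM_ybr_perm t t' ys ys' :
  {in ys, forall v, is_diag_mx (phi v)} -> perm_eq ys ys' ->
  evalM phi t = evalM phi t' -> evalM phi (ybr t ys) = evalM phi (ybr t' ys').
Proof.
move=> ys_diag ys_ys' tt'; apply/matrixP => i j.
have ys'_diag : {in ys', forall v, is_diag_mx (phi v)}.
  by move=> v; rewrite -(perm_mem ys_ys'); exact: ys_diag.
by rewrite !evalM_ybr // tt' (perm_big _ ys_ys').
Qed.

Lemma graded_eval_diag v : graded_eval phi -> isY v -> is_diag_mx (phi v).
Proof.
case: v => // m phi_graded _; apply/is_diag_mxP => k l kl.
by apply/eqP; apply: contraNT kl => /phi_graded /=; rewrite addn0 => ->.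
Qed.

End DiagonalBrackets.

Section Embedding.
Variables (ph : nat -> nat) (s s' : seq nat).

Definition push j : nat := \sum_(i < size s | ph i == j) nth 0 s i.

Definition deficit : seq nat := mkseq (fun j => nth 0 s' j - push j)%N (size s').

Definition embeds : Prop :=
  {in gtn (size s) &, injective ph} /\
  forall i, (i < size s)%N -> (ph i < size s')%N /\ (nth 0 s i <= nth 0 s' (ph i))%N.

Lemma sum_push (f : nat -> nat) :
  (forall i, i < size s -> ph i < size s')%N ->
  (\sum_(i < size s) f (ph i) * nth 0 s i = \sum_(j < size s') f j * push j)%N.
Proof.
move=> ph_lt.
transitivity (\sum_(i < size s) \sum_(j < size s')
                 (if ph i == j then f j * nth 0 s i else 0))%N.
  apply: eq_bigr => i _; rewrite -big_mkcond.
  by rewrite (big_pred1 (Ordinal (ph_lt i (ltn_ord i)))) // => j; rewrite eq_sym.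
rewrite exchange_big; apply: eq_bigr => j _.
by rewrite /push big_distrr -big_mkcond.
Qed.

Lemma push_le j : embeds -> (push j <= nth 0 s' j)%N.
Proof.
case=> ph_inj ph_le; rewrite /push.
case: (pickP (fun i : 'I_(size s) => ph i == j)) => [i0 /eqP ph_i0 | none];
  last by rewrite big_pred0.
rewrite (bigD1 i0) /= ?ph_i0 ?eqxx // big1 ?addn0.
  by rewrite -ph_i0; case: (ph_le _ (ltn_ord i0)).
move=> i /andP[/eqP ph_i i_i0]; case/eqP: i_i0; apply: val_inj.
by apply: ph_inj (ltn_ord i) (ltn_ord i0) _; rewrite ph_i ph_i0.
Qed.

(* [yseq 1] lists y_1, y_2, ..., so position i of a vector is the variable VY i.+1. *)
Definition renY (v : var) : var := if v is VY i then VY (ph i.-1).+1 else v.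

Lemma perm_yseq_deficit :
  embeds -> perm_eq (yseq 1 s') (yseq 1 deficit ++ map renY (yseq 1 s)).
Proof.
move=> emb; apply/permP => p; apply/esym.
rewrite count_cat count_map !count_yseq size_mkseq.
rewrite (eq_bigr (fun i : 'I_(size s) => p (VY (ph i).+1) * nth 0 s i)%N) => [|i _];
  last by rewrite add1n.
rewrite (sum_push (fun j => p (VY j.+1))) => [|i]; last by case: emb => _ ph_le /ph_le[].
rewrite -big_split; apply: eq_bigr => j _ /=.
by rewrite nth_mkseq // add1n -mulnDr subnK // push_le.
Qed.

End Embedding.

Lemma leB_embeds (V V' : seq (nat * nat)) :
  leB V V' -> exists ph, embeds ph (unzip1 V) (unzip1 V') /\ embeds ph (unzip2 V) (unzip2 V').
Proof.
case=> ph [ph_mono ph_le]; exists ph.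
have ph_inj : {in gtn (size V) &, injective ph}.
  move=> i k i_lt k_lt eq_ph; case: (ltngtP i k) => // [ik|ki].
  - by have := ph_mono _ _ ik k_lt; rewrite eq_ph ltnn.
  - by have := ph_mono _ _ ki i_lt; rewrite eq_ph ltnn.
rewrite /embeds !size_map; split; split=> // i i_lt;
  by case: (ph_le i i_lt) => ph_lt le1 le2; rewrite !(nth_map (0, 0)).
Qed.

Lemma lsubst_ybr (F : Type) (s : var -> lterm F) (r : var -> var) t ys :
  {in ys, forall v, s v = LVar (r v)} ->
  lsubst s (ybr t ys) = ybr (lsubst s t) (map r ys).
Proof.
elim: ys t => [|v ys IH] t //= s_ys.
by rewrite IH /= ?s_ys ?mem_head // => w w_ys; rewrite s_ys // inE w_ys orbT.
Qed.

Lemma shomog_lt3 (F : Type) d (t : lterm F) : shomog d t -> (d < 3)%N.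
Proof. by elim=> // [[]|d1 d2 *]; rewrite ?ltn_mod. Qed.

Lemma shomog_ybr (F : Type) d (t : lterm F) ys :
  shomog d t -> all isY ys -> shomog d (ybr t ys).
Proof.
elim: ys t => [|[n||] ys IH] t //= t_d ys_Y; apply: IH => //.
rewrite -[d in shomog d _](modn_small (shomog_lt3 t_d)) -[d in (d %% 3)%N]addn0.
exact: sh_br t_d (sh_var F (VY n)).
Qed.

Section TidealFacts.
Variables (F : fieldType) (S : lterm F -> Prop).

Lemma Tideal_ybr t ys : Tideal S t -> Tideal S (ybr t ys).
Proof. by elim: ys t => [|v ys IH] t //= /(ti_brl (LVar v)); apply: IH. Qed.

Lemma Tideal_evalM_congr g h :
  (forall t, graded_identity t -> S t) -> Tideal S h ->
  (forall phi, graded_eval phi -> evalM phi g = evalM phi h) -> Tideal S g.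
Proof.
move=> S_id S_h g_h.
have S_gh : Tideal S (LAdd h (LAdd g (LScale (-1) h))).
  apply: ti_add S_h (ti_base _); apply: S_id => phi phi_graded /=.
  by rewrite g_h // scaleN1r subrr.
apply: ti_equiv S_gh _; set mh := LScale (-1) h.
apply: le_trans (le_addA _ _ _) _.
apply: le_trans (le_add (le_addC h g) (le_refl mh)) _.
apply: le_trans (le_sym (le_addA _ _ _)) _.
apply: le_trans (le_add (le_refl g) (le_addN h)) _.
exact: le_trans (le_addC _ _) (le_add0 _).
Qed.

End TidealFacts.

Lemma shomog_homog (F : fieldType) d (t : lterm F) : shomog d t -> homog d t.
Proof. by exists t; split; first exact: le_refl. Qed.

Section Spreading.
Variables (F : fieldType) (ph : nat -> nat).

Definition spread (D : seq nat) (v : var) : lterm F :=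
  if v is VZ 1 then ybr (LVar (VZ 1)) (yseq 1 D) else LVar (renY ph v).

Lemma homog_spread D v : homog (vdeg v) (spread D v).
Proof.
apply: shomog_homog; case: v => [n|[|[|k]]|n] /=.
- exact: (sh_var F (VY _)).
- exact: (sh_var F (VZ 0)).
- exact/shomog_ybr/all_isY_yseq/(sh_var F (VZ 1)).
- exact: (sh_var F (VZ _)).
- exact: (sh_var F (VW _)).
Qed.

Lemma spread_Y D ys : all isY ys -> {in ys, forall v, spread D v = LVar (renY ph v)}.
Proof. by move=> /allP ys_Y [n|n|n] /ys_Y. Qed.

Lemma lsubst_spread_commB D V :
  lsubst (spread D) (commB F V) =
  ybr (LBr (ybr (LVar (VZ 1)) (yseq 1 D ++ map (renY ph) (yseq 1 (unzip1 V))))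
           (LVar (VZ 2)))
      (map (renY ph) (yseq 1 (unzip2 V))).
Proof.
have spread_yseq s := spread_Y D (all_isY_yseq 1 s).
by rewrite commB_ybr !(lsubst_ybr _ (spread_yseq _)) /= (lsubst_ybr _ (spread_yseq _)) ybr_cat.
Qed.

End Spreading.

Lemma evalM_commB_spread (F : fieldType) ph (Vf Vg : seq (nat * nat)) phi :
  embeds ph (unzip1 Vf) (unzip1 Vg) -> embeds ph (unzip2 Vf) (unzip2 Vg) ->
  graded_eval phi ->
  evalM phi (commB F Vg) =
  evalM phi (ybr (lsubst (spread F ph (deficit ph (unzip1 Vf) (unzip1 Vg))) (commB F Vf))
                 (yseq 1 (deficit ph (unzip2 Vf) (unzip2 Vg)))).
Proof.
move=> emb1 emb2 phi_graded.
have yseq_diag s : {in yseq 1 s, forall v, is_diag_mx (phi v)}.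
  by move=> v /(allP (all_isY_yseq 1 s)); exact: graded_eval_diag.
rewrite lsubst_spread_commB -ybr_cat commB_ybr.
apply: evalM_ybr_perm; first exact: yseq_diag.
  exact: perm_trans (perm_yseq_deficit emb2) (permEl (perm_catC _ _)).
by rewrite /= (evalM_ybr_perm (yseq_diag _) (perm_yseq_deficit emb1) (erefl _)).
Qed.

Theorem mainTheorem7 (F : fieldType) (HF : infinite_field F)
  (Vf Vg : seq (nat * nat)) :
  leB Vf Vg ->
  Tideal (fun t : lterm F => t = commB F Vf \/ graded_identity t) (commB F Vg).
Proof.
case/leB_embeds=> ph [emb1 emb2].
apply: Tideal_evalM_congr (fun phi => evalM_commB_spread (phi := phi) emb1 emb2).
- by move=> t; right.
- apply/Tideal_ybr/ti_subst; first exact: homog_spread.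
  by apply: ti_base; left.
Qed.
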